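(* Let $\mathcal{G}=(V,\mathcal{E})$ be a plurigraph with $V=[n]$. Then $$Y_{\mathcal{G}}=\sum_{A\subseteq\mathcal{E}}(-1)^{|A|}p_{\pi(A)},$$ where the sum is over all sub-multisets $A$ of $\mathcal{E}$ (the elements of $\mathcal{E}$ being regarded as distinct, so there are $2^{|\mathcal{E}|}$ terms).
   Context: Work over a field $\mathbb{K}$ of characteristic zero with noncommuting variables $y_1,y_2,\dots$, $\mathbb{P}=\{1,2,\dots\}$. A graph $(V,E)$ has $E$ a finite multiset of unordered pairs of (not necessarily distinct) vertices. A plurigraph is $\mathcal{G}=(V,\mathcal{E})$ with $\mathcal{E}$ a finite multiset of graphs $(V,E)$ on vertex set $V$ with $E\ne\emptyset$. A proper coloring is $f:V\to\mathbb{P}$ such that each $(V,E)\in\mathcal{E}$ has an edge $uv\in E$ with $f(u)\ne f(v)$; $Y_{\mathcal{G}}=\sum_f y_{f(1)}\cdots y_{f(n)}$ over proper colorings. For a set partition $\pi$ of $[n]$, $m_\pi=\sum y_{i_1}\cdots y_{i_n}$ over sequences $(i_1,\dots,i_n)\in\mathbb{P}^n$ with $i_j=i_k$ iff $j,k$ lie in the same block of $\pi$, and $p_\pi=\sum_{\sigma\ge\pi}m_\sigma$, the sum over set partitions $\sigma$ of $[n]$ coarser than or equal to $\pi$. For $A=\{(V,E_1),\dots,(V,E_k)\}\subseteq\mathcal{E}$, $\pi(A)$ is the partition of $V$ into connected components of the graph $(V,\bigcup_{i}E_i)$ (for $A=\emptyset$ this is the partition into singletons). *)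

From mathcomp Require Import all_boot all_order all_algebra.
Set Implicit Arguments. Unset Strict Implicit. Unset Printing Implicit Defensive.
Import GRing.Theory.
Local Open Scope ring_scope.

(* A formal series in the noncommuting variables y_1, y_2, ... over K is
   represented by its coefficient function on words: a word
   y_{i_1} ... y_{i_k} is the sequence [:: i_1; ...; i_k] : seq nat
   (all letters must be >= 1; words containing a 0 are not monomials and
   every series considered here has coefficient 0 on them). *)
Definition series (K : Type) := seq nat -> K.

Definition word_of_len (n : nat) (w : seq nat) : bool :=
  (size w == n) && all (fun i => 0 < i)%N w.

Definition letter (w : seq nat) (j : nat) : nat := nth 0%N w j.

(* A graph on V is its finite
   multiset of edges: a seq of (unordered) pairs of vertices, loops allowed. *)
Definition graph (n : nat) := seq ('I_n * 'I_n).
Definition plurigraph (n : nat) := seq (graph n).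
Definition is_plurigraph n (E : plurigraph n) : bool := all (fun e => e != [::]) E.

(* Y_G : coefficient of the word w is 1 iff w = f(1)...f(n) for a proper
   coloring f : V -> P, i.e. every graph of E has an edge uv with
   f(u) <> f(v). *)
Definition Ychrom (K : nzRingType) n (E : plurigraph n) : series K :=
  fun w => if word_of_len n w &&
              all (fun e : graph n => has (fun uv : 'I_n * 'I_n => letter w uv.1 != letter w uv.2) e) E
           then 1 else 0.

Definition setpart n (P : {set {set 'I_n}}) : bool := partition P [set: 'I_n].

Definition coarser n (pi sigma : {set {set 'I_n}}) : bool :=
  [forall B in pi, exists C in sigma, B \subset C].

Definition msym (K : nzRingType) n (pi : {set {set 'I_n}}) : series K :=
  fun w => if word_of_len n w &&
              [forall j : 'I_n, forall k : 'I_n,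
                 (letter w j == letter w k) ==
                 [exists B in pi, (j \in B) && (k \in B)]]
           then 1 else 0.

Definition psym (K : nzRingType) n (pi : {set {set 'I_n}}) : series K :=
  fun w => \sum_(sigma : {set {set 'I_n}} | setpart sigma && coarser pi sigma)
             msym K sigma w.

(* pi(A): connected components of (V, union of the edge sets of the graphs
   of E indexed by A).  A sub-multiset of E is a subset of the index set
   'I_(size E) (elements of E regarded as distinct). *)
Definition union_adj n (E : plurigraph n) (A : {set 'I_(size E)}) : rel 'I_n :=
  fun u v => [exists i in A,
                ((u, v) \in nth [::] E i) || ((v, u) \in nth [::] E i)].

Definition comp_partition n (E : plurigraph n) (A : {set 'I_(size E)}) : {set {set 'I_n}} :=
  equivalence_partition (fun u v => connect (union_adj A) u v) [set: 'I_n].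

From mathcomp Require Import all_boot all_order all_algebra.
Import GRing.Theory.
Set Implicit Arguments. Unset Strict Implicit. Unset Printing Implicit Defensive.
Local Open Scope ring_scope.

(* Fix a word w of length n and read it as the colouring f : j |-> w_j of the
   vertices.  Then p_pi(w) = 1 exactly when f is constant on the blocks of pi,
   and f is constant on the components of (V, U_{e in A} e) exactly when every
   graph of A is monochromatic under f.  Hence the right-hand side is
   sum_A (-1)^|A| prod_{e in A} [e monochromatic] = prod_e (1 - [e monochromatic]),
   which is the indicator that no graph of E is monochromatic, i.e. Y_G(w). *)

Section SetPartitions.

Variable T : finType.
Implicit Types (P Q : {set {set T}}) (x y : T).

Definition same_block P x y : bool := [exists B in P, (x \in B) && (y \in B)].

Lemma same_blockE P x y :
  partition P [set: T] -> same_block P x y = (y \in pblock P x).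
Proof.
case/and3P => /eqP covP trivP _; apply/existsP/idP => [[B]|yPx].
  by case/andP=> BP /andP[xB yB]; rewrite (def_pblock trivP BP xB).
exists (pblock P x); rewrite yPx andbT pblock_mem ?covP ?inE //=.
by rewrite mem_pblock covP inE.
Qed.

Lemma eq_partition P Q :
  partition P [set: T] -> partition Q [set: T] ->
  same_block P =2 same_block Q -> P = Q.
Proof.
move=> partP partQ eqPQ.
rewrite -(equivalence_partition_pblock partP) -(equivalence_partition_pblock partQ).
apply: eq_imset => x; apply/setP => y.
by rewrite !inE -!same_blockE ?eqPQ.
Qed.

Section EquivalencePartition.

Variable R : rel T.
Hypothesis eqiR : {in [set: T] & &, equivalence_rel R}.

Lemma same_block_equivalence_partition x y :
  same_block (equivalence_partition R [set: T]) x y = R x y.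
Proof.
by rewrite same_blockE ?equivalence_partitionP ?pblock_equivalence_partition ?inE.
Qed.

End EquivalencePartition.

Variable rT : eqType.
Implicit Type f : T -> rT.

Definition fibre_partition (f : T -> rT) : {set {set T}} :=
  equivalence_partition [rel x y | f x == f y] [set: T].

Lemma fibre_equiv f : {in [set: T] & &, equivalence_rel [rel x y | f x == f y]}.
Proof. by move=> x y z _ _ _ /=; split=> [|/eqP ->]. Qed.

Lemma fibre_partitionP f : partition (fibre_partition f) [set: T].
Proof. exact: equivalence_partitionP (fibre_equiv f). Qed.

Lemma same_block_fibre f x y : same_block (fibre_partition f) x y = (f x == f y).
Proof. by rewrite same_block_equivalence_partition //; exact: fibre_equiv. Qed.

End SetPartitions.

Lemma coarser_fibre_partition n (pi : {set {set 'I_n}}) (rT : eqType) (f : 'I_n -> rT) :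
  partition pi [set: 'I_n] ->
  coarser pi (fibre_partition f) = [forall x, forall y, same_block pi x y ==> (f x == f y)].
Proof.
move=> partpi; apply/forall_inP/forallP => [coarse x | fconst B Bpi].
  apply/forallP => y; apply/implyP => /existsP[B /andP[Bpi /andP[xB yB]]].
  have /existsP[C /andP[Cf /subsetP BC]] := coarse B Bpi.
  by rewrite -same_block_fibre; apply/existsP; exists C; rewrite Cf !BC.
have /set0Pn[x xB] : B != set0.
  by apply: contraTneq Bpi => ->; case/and3P: partpi.
have [/eqP covf _ _] := and3P (fibre_partitionP f).
apply/existsP; exists (pblock (fibre_partition f) x).
rewrite pblock_mem ?covf ?inE //=; apply/subsetP => y yB.
rewrite -same_blockE ?fibre_partitionP // same_block_fibre.
apply: (implyP (forallP (fconst x) y)).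
by apply/existsP; exists B; rewrite Bpi xB.
Qed.

Definition coloring_of_word n (w : seq nat) : 'I_n -> nat := fun j => letter w j.

Lemma msymE (K : nzRingType) n (sigma : {set {set 'I_n}}) w :
  setpart sigma ->
  msym K sigma w = (word_of_len n w && (sigma == fibre_partition (coloring_of_word w)))%:R.
Proof.
move=> partsigma; rewrite /msym; case: (word_of_len n w) => //=.
have -> : [forall j : 'I_n, forall k : 'I_n,
             (letter w j == letter w k) == same_block sigma j k]
          = (sigma == fibre_partition (coloring_of_word w)).
  apply/forallP/eqP => [samew | -> x]; last first.
    by apply/forallP => y; rewrite same_block_fibre.
  apply: eq_partition => // [|x y]; first exact: fibre_partitionP.
  by rewrite same_block_fibre; have /forallP/(_ y)/eqP -> := samew x.
by case: eqP.
Qed.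

Lemma psymE (K : nzRingType) n (pi : {set {set 'I_n}}) w :
  psym K pi w =
  (word_of_len n w && coarser pi (fibre_partition (coloring_of_word w)))%:R.
Proof.
rewrite /psym; under eq_bigr => sigma /andP[partsigma _] do rewrite msymE //.
case: (word_of_len n w) => /=; last by rewrite big1.
set F := fibre_partition _; have partF : setpart F := fibre_partitionP _.
case: (boolP (coarser pi F)) => [coarseF | ncoarseF].
  rewrite (bigD1 F) ?partF //= eqxx big1 ?addr0 // => sigma /andP[_].
  by move/negbTE->.
rewrite big1 // => sigma /andP[/andP[_ coarse_sigma]].
by case: eqP coarse_sigma => // ->; rewrite (negbTE ncoarseF).
Qed.

Definition monochromatic n (rT : eqType) (f : 'I_n -> rT) (e : graph n) : bool :=
  all (fun uv : 'I_n * 'I_n => f uv.1 == f uv.2) e.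

Section ComponentPartition.

Variables (n : nat) (E : plurigraph n) (A : {set 'I_(size E)}).

Lemma union_adj_sym : symmetric (union_adj A).
Proof.
by move=> u v; apply/existsP/existsP => -[i /andP[iA uv]]; exists i; rewrite iA orbC.
Qed.

Lemma connect_union_adj_equiv :
  {in [set: 'I_n] & &, equivalence_rel (connect (union_adj A))}.
Proof.
move=> x y z _ _ _; split=> [|cxy]; first exact: connect0.
apply/idP/idP => [cxz|]; last exact: connect_trans.
by apply: connect_trans cxz; rewrite (sym_connect_sym union_adj_sym).
Qed.

Lemma comp_partitionP : partition (comp_partition A) [set: 'I_n].
Proof. exact: equivalence_partitionP connect_union_adj_equiv. Qed.

Lemma same_block_comp_partition : same_block (comp_partition A) =2 connect (union_adj A).
Proof. exact: same_block_equivalence_partition connect_union_adj_equiv. Qed.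

Lemma connect_union_adj_monochromatic (rT : eqType) (f : 'I_n -> rT) :
  [forall x, forall y, connect (union_adj A) x y ==> (f x == f y)] =
  [forall i in A, monochromatic f (nth [::] E i)].
Proof.
apply/forallP/forall_inP => [fconst i iA | mono x].
  apply/allP => -[u v] uv /=; apply: (implyP (forallP (fconst u) v)).
  by apply: connect1; apply/existsP; exists i; rewrite iA uv.
apply/forallP => y; apply/implyP => /connectP[p xp ->] {y}.
elim: p x xp => //= y p IHp x /andP[/existsP[i /andP[iA xy]] /IHp /eqP <-].
have /allP mono_i := mono i iA.
by case/orP: xy => /mono_i /eqP //= ->.
Qed.

Lemma coarser_comp_partition (rT : eqType) (f : 'I_n -> rT) :
  coarser (comp_partition A) (fibre_partition f) =
  [forall i in A, monochromatic f (nth [::] E i)].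
Proof.
rewrite coarser_fibre_partition ?comp_partitionP // -connect_union_adj_monochromatic.
by apply: eq_forallb => x; apply: eq_forallb => y; rewrite same_block_comp_partition.
Qed.

End ComponentPartition.

Lemma YchromE (K : nzRingType) n (E : plurigraph n) w :
  Ychrom K E w =
  (word_of_len n w &&
   [forall i : 'I_(size E), ~~ monochromatic (coloring_of_word w) (nth [::] E i)])%:R.
Proof.
rewrite /Ychrom; case: (word_of_len n w) => //=.
have -> : all (fun e : graph n =>
                has (fun uv : 'I_n * 'I_n => letter w uv.1 != letter w uv.2) e) E =
          [forall i : 'I_(size E), ~~ monochromatic (coloring_of_word w) (nth [::] E i)].
  apply/(all_nthP [::])/forallP => [notmono i | notmono i ltiE].
    by rewrite /monochromatic -has_predC; apply: notmono.
  by have := notmono (Ordinal ltiE); rewrite /monochromatic -has_predC.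
by case: forallP.
Qed.

Lemma prodr_natr_bool (R : comNzRingType) (I : finType) (P : pred I) (b : pred I) :
  \prod_(i | P i) (b i)%:R = [forall (i | P i), b i]%:R :> R.
Proof.
have [/forall_inP ballP | /forall_inPn[i Pi nbi]] := boolP [forall (i | P i), b i].
  by rewrite big1 // => i /ballP ->.
by rewrite (bigD1 i) //= (negbTE nbi) mul0r.
Qed.

Lemma sum_subsets_signed_prod (R : comNzRingType) (I : finType) (x : I -> R) :
  \sum_(A : {set I}) (-1) ^+ #|A| * \prod_(i in A) x i = \prod_i (1 - x i).
Proof.
rewrite (eq_bigr (fun i => - x i + 1)) => [|i _]; last exact: addrC.
rewrite bigA_distr; apply: eq_bigr => A _.
by rewrite -big_mkcond prodrN.
Qed.

Lemma sum_subsets_sign_forall (R : comNzRingType) (I : finType) (b : pred I) :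
  \sum_(A : {set I}) (-1) ^+ #|A| * [forall i in A, b i]%:R = [forall i, ~~ b i]%:R :> R.
Proof.
under eq_bigr => A _ do rewrite -prodr_natr_bool.
rewrite sum_subsets_signed_prod (eq_bigr (fun i => (~~ b i)%:R)) => [|i _].
  exact: prodr_natr_bool.
by case: (b i); rewrite ?subrr ?subr0.
Qed.

Theorem theorem2p6 (K : fieldType) (Kchar0 : [pchar K] =i pred0)
  (n : nat) (E : plurigraph n) (HE : is_plurigraph E) :
  forall w : seq nat,
    Ychrom K E w =
    \sum_(A : {set 'I_(size E)}) (-1) ^+ #|A| * psym K (comp_partition A) w.
Proof.
move=> w; rewrite YchromE.
under eq_bigr => A _ do rewrite psymE coarser_comp_partition.
case: (word_of_len n w) => /=; last by rewrite big1 // => A _; rewrite mulr0.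
by rewrite sum_subsets_sign_forall.
Qed.
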